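(* Let \[U_1:=\left\{(a,b)\in\bigl([0,1/2)\times[1/2,1)\bigr)\cup\bigl([1/2,1)\times[0,1/2)\bigr):\ a+b<\tfrac34\right\}.\] Let $x,z\in U_1$ and let $y^*=\frac{x+z}{2}$. Then \[(1-\{x_1\})^2+(1-\{z_1\})^2-2(1-\{y^*_1\})^2\ge 2\left(\frac{z_1-x_1}{2}\right)^2.\]
   Context: For $x\in[0,1)$, $\{x\}:=x$ if $x\in[0,1/2)$ and $\{x\}:=x-1/2$ otherwise (this is not the usual fractional part). Subscripts denote coordinates of points in $\mathbb{R}^2$. *)

From Stdlib Require Import Reals Lra.
Open Scope R_scope.

(* The paper's modified "fractional part" on [0,1):
   {x} = x if x in [0,1/2), and x - 1/2 otherwise (intended for x in [0,1)). *)
Definition hfrac (x : R) : R := if Rlt_dec x (1/2) then x else x - 1/2.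

Definition U1 (p : R * R) : Prop :=
  let a := fst p in let b := snd p in
  ((0 <= a < 1/2 /\ 1/2 <= b < 1) \/ (1/2 <= a < 1 /\ 0 <= b < 1/2))
  /\ a + b < 3/4.

(* The map t |-> (1 - t)^2 has midpoint defect
   (1-u)^2 + (1-v)^2 - 2 (1-(u+v)/2)^2 = 2 ((v-u)/2)^2, independently of
   translations.  First coordinates of points of U1 lie in [0,1/4) or in
   [1/2,3/4), and on each of these bands {.} is a translation.  If both points
   lie in the same band, so does their midpoint and the defect is unchanged.
   Otherwise the midpoint lies in [1/4,1/2), where {.} is the identity, and
   only the upper point v is shifted down by 1/2, which raises its term by
   5/4 - v > 0. *)
From Stdlib Require Import Reals Lra.
Open Scope R_scope.

Definition low_band (t : R) : Prop := 0 <= t < 1/4.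
Definition high_band (t : R) : Prop := 1/2 <= t < 3/4.

Lemma U1_fst_band (p : R * R) : U1 p -> low_band (fst p) \/ high_band (fst p).
Proof.
  destruct p as [a b]; unfold U1, low_band, high_band; simpl; lra.
Qed.

Lemma hfrac_lt_half (t : R) : t < 1/2 -> hfrac t = t.
Proof.
  intros Ht; unfold hfrac; destruct (Rlt_dec t (1/2)); [reflexivity | lra].
Qed.

Lemma hfrac_ge_half (t : R) : 1/2 <= t -> hfrac t = t - 1/2.
Proof.
  intros Ht; unfold hfrac; destruct (Rlt_dec t (1/2)); [lra | reflexivity].
Qed.

Lemma sq_midpoint_defect (k u v : R) :
  (k - u) ^ 2 + (k - v) ^ 2 - 2 * (k - (u + v) / 2) ^ 2 = 2 * ((v - u) / 2) ^ 2.
Proof. field. Qed.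

Definition hfrac_defect (u v : R) : R :=
  (1 - hfrac u) ^ 2 + (1 - hfrac v) ^ 2 - 2 * (1 - hfrac ((u + v) / 2)) ^ 2.

Lemma hfrac_defect_sym (u v : R) : hfrac_defect u v = hfrac_defect v u.
Proof.
  unfold hfrac_defect; replace ((v + u) / 2) with ((u + v) / 2) by field; ring.
Qed.

Lemma hfrac_defect_low (u v : R) :
  low_band u -> low_band v -> hfrac_defect u v = 2 * ((v - u) / 2) ^ 2.
Proof.
  unfold low_band, hfrac_defect; intros Hu Hv.
  rewrite !hfrac_lt_half by lra.
  apply sq_midpoint_defect.
Qed.

Lemma hfrac_defect_high (u v : R) :
  high_band u -> high_band v -> hfrac_defect u v = 2 * ((v - u) / 2) ^ 2.
Proof.
  unfold high_band, hfrac_defect; intros Hu Hv.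
  rewrite !hfrac_ge_half by lra.
  pose proof (sq_midpoint_defect (3/2) u v); lra.
Qed.

Lemma hfrac_defect_mixed (u v : R) :
  low_band u -> high_band v -> hfrac_defect u v >= 2 * ((v - u) / 2) ^ 2.
Proof.
  unfold low_band, high_band, hfrac_defect; intros Hu Hv.
  rewrite (hfrac_lt_half u), (hfrac_ge_half v), (hfrac_lt_half ((u + v) / 2))
    by lra.
  pose proof (sq_midpoint_defect 1 u v); lra.
Qed.

Theorem lemma4p3 (x z : R * R) (hx : U1 x) (hz : U1 z) :
  let ystar := ((fst x + fst z) / 2, (snd x + snd z) / 2) in
  (1 - hfrac (fst x)) ^ 2 + (1 - hfrac (fst z)) ^ 2
    - 2 * (1 - hfrac (fst ystar)) ^ 2
  >= 2 * ((fst z - fst x) / 2) ^ 2.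
Proof.
  simpl; change (hfrac_defect (fst x) (fst z) >= 2 * ((fst z - fst x) / 2) ^ 2).
  destruct (U1_fst_band x hx) as [Hx | Hx], (U1_fst_band z hz) as [Hz | Hz].
  - rewrite hfrac_defect_low by assumption; lra.
  - now apply hfrac_defect_mixed.
  - rewrite hfrac_defect_sym.
    replace (((fst z - fst x) / 2) ^ 2) with (((fst x - fst z) / 2) ^ 2) by field.
    now apply hfrac_defect_mixed.
  - rewrite hfrac_defect_high by assumption; lra.
Qed.
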